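(* Let $(\mathcal{C},\mathbb{E},\mathfrak{s})$ be an extriangulated category with enough projective objects and enough injective objects, and let $(\mathcal{I},\mathcal{J})$ be an $\mathbb{E}$-cotorsion pair of ideals. Then $\mathcal{I}$ is a special precovering ideal if and only if $\mathcal{J}$ is a special preenveloping ideal.
   Context: An extriangulated category $(\mathcal{C},\mathbb{E},\mathfrak{s})$ (Nakaoka–Palu): additive $\mathcal{C}$, biadditive $\mathbb{E}:\mathcal{C}^{\mathrm{op}}\times\mathcal{C}\to\mathrm{Ab}$, additive realization $\mathfrak{s}$ assigning to each $\delta\in\mathbb{E}(C,A)$ an equivalence class of sequences $A\to B\to C$, forming $\mathbb{E}$-triangles $A\to B\to C\overset{\delta}{\dashrightarrow}$, satisfying (ET1)–(ET4), (ET3)$^{\mathrm{op}}$, (ET4)$^{\mathrm{op}}$. Notation $a_\star\delta=\mathbb{E}(C,a)(\delta)$, $c^\star\delta=\mathbb{E}(c,A)(\delta)$; a morphism of $\mathbb{E}$-triangles is a commuting triple $(a,b,c)$ with $a_\star\delta=c^\star\delta'$. An object $E$ is injective if $\mathbb{E}(C,E)=0$ for all $C$ (equivalently it has the extension property along $\mathbb{E}$-inflations); projective objects dually ($\mathbb{E}(P,A)=0$ for all $A$). Enough injective objects: every $A$ admits an $\mathbb{E}$-triangle $A\to E\to C\overset{\delta}{\dashrightarrow}$ with $E$ injective; enough projective objects: every $C$ admits an $\mathbb{E}$-triangle $K\to P\to C\overset{\delta}{\dashrightarrow}$ with $P$ projective. An ideal: class of morphisms with zeros, closed under sums and two-sided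 composition. $\mathcal{M}^{\perp_{\mathbb{E}}}=\{g:A\to Y\mid m^\star g_\star\delta=0\ \forall m\in\mathcal{M},\,m:X\to C,\ \forall\delta\in\mathbb{E}(C,A)\}$; ${}^{\perp_{\mathbb{E}}}\mathcal{M}=\{g:X\to C\mid g^\star m_\star\delta=0\ \forall m\in\mathcal{M},\,m:A\to Y,\ \forall\delta\in\mathbb{E}(C,A)\}$. An $\mathbb{E}$-cotorsion pair: $\mathcal{I}={}^{\perp_{\mathbb{E}}}\mathcal{J}$ and $\mathcal{J}=\mathcal{I}^{\perp_{\mathbb{E}}}$. Special $\mathcal{I}$-precover of $C$: $i:X\to C$ in $\mathcal{I}$ with $\mathbb{E}$-triangles $A\to B\to C\overset{\delta}{\dashrightarrow}$, $A'\to X\xrightarrow{i}C\overset{\delta'}{\dashrightarrow}$ and a morphism $(j,b,\mathrm{id}_C)$ between them, $j\in\mathcal{I}^{\perp_{\mathbb{E}}}$. Special $\mathcal{J}$-preenvelope of $A$: $e:A\to X$ in $\mathcal{J}$ with $\mathbb{E}$-triangles $A\xrightarrow{e}X\to Y\overset{\delta}{\dashrightarrow}$, $A\to B\to C\overset{\delta'}{\dashrightarrow}$ and a morphism $(\mathrm{id}_A,b,j)$ from the first to the second, $j\in{}^{\perp_{\mathbb{E}}}\mathcal{J}$. Special precovering/preenveloping ideal: every object has such a precover/preenvelope. *)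

From HB Require Import structures.
From mathcomp Require Import all_boot all_algebra.
Set Implicit Arguments. Unset Strict Implicit. Unset Printing Implicit Defensive.
Import GRing.Theory.
Local Open Scope ring_scope.

Record PreaddCat := {
  obj : Type;
  hom : obj -> obj -> zmodType;
  comp : forall A B C : obj, hom B C -> hom A B -> hom A C;
  idm : forall A : obj, hom A A;
  compA : forall A B C D (h : hom C D) (g : hom B C) (f : hom A B),
      comp h (comp g f) = comp (comp h g) f;
  comp1m : forall A B (f : hom A B), comp (idm B) f = f;
  compm1 : forall A B (f : hom A B), comp f (idm A) = f;
  compDl : forall A B C (g g' : hom B C) (f : hom A B),
      comp (g + g') f = comp g f + comp g' f;
  compDr : forall A B C (g : hom B C) (f f' : hom A B),
      comp g (f + f') = comp g f + comp g f'
}.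
Arguments obj : clear implicits.
Arguments hom : clear implicits.
Arguments comp {p A B C} _ _.
Arguments idm {p} A.

Section PreaddDefs.
Variable C : PreaddCat.

Definition is_iso (A B : obj C) (f : hom C A B) :=
  exists g : hom C B A, comp g f = idm A /\ comp f g = idm B.

Definition is_biproduct (A1 A2 S : obj C) (i1 : hom C A1 S) (i2 : hom C A2 S)
    (p1 : hom C S A1) (p2 : hom C S A2) :=
  [/\ comp p1 i1 = idm A1, comp p2 i2 = idm A2, comp p1 i2 = 0,
      comp p2 i1 = 0 & comp i1 p1 + comp i2 p2 = idm S].

Definition is_zero_object (Z : obj C) :=
  (forall X (f : hom C X Z), f = 0) /\ (forall X (f : hom C Z X), f = 0).

Definition is_additive :=
  (exists Z, is_zero_object Z) /\
  (forall A1 A2 : obj C, exists S (i1 : hom C A1 S) (i2 : hom C A2 S)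
       (p1 : hom C S A1) (p2 : hom C S A2), is_biproduct i1 i2 p1 p2).
End PreaddDefs.

Record AddCat := {
  acat :> PreaddCat;
  acat_additive : is_additive acat
}.

(* Ext C A stands for E(C,A); pull c = c^*, push a = a_* *)
Record Bifunctor (C : PreaddCat) := {
  Ext : obj C -> obj C -> zmodType;
  pull : forall (C' C0 A : obj C), hom C C' C0 -> Ext C0 A -> Ext C' A;
  push : forall (C0 A A' : obj C), hom C A A' -> Ext C0 A -> Ext C0 A';
  pull_add : forall C' C0 A (c : hom C C' C0) (d d' : Ext C0 A),
      pull c (d + d') = pull c d + pull c d';
  push_add : forall C0 A A' (a : hom C A A') (d d' : Ext C0 A),
      push a (d + d') = push a d + push a d';
  pull_addm : forall C' C0 A (c c' : hom C C' C0) (d : Ext C0 A),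
      pull (c + c') d = pull c d + pull c' d;
  push_addm : forall C0 A A' (a a' : hom C A A') (d : Ext C0 A),
      push (a + a') d = push a d + push a' d;
  pull_id : forall C0 A (d : Ext C0 A), pull (idm C0) d = d;
  push_id : forall C0 A (d : Ext C0 A), push (idm A) d = d;
  pull_comp : forall C'' C' C0 A (c : hom C C' C0) (c' : hom C C'' C') (d : Ext C0 A),
      pull (comp c c') d = pull c' (pull c d);
  push_comp : forall C0 A A' A'' (a : hom C A A') (a' : hom C A' A'') (d : Ext C0 A),
      push (comp a' a) d = push a' (push a d);
  push_pull : forall C' C0 A A' (c : hom C C' C0) (a : hom C A A') (d : Ext C0 A),
      push a (pull c d) = pull c (push a d)
}.
Arguments Ext {C} b _ _.
Arguments pull {C} b {C' C0 A} _ _.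
Arguments push {C} b {C0 A A'} _ _.

Section ETAxioms.
Variable C : AddCat.
Variable E : Bifunctor C.
(* realization: s d x y  means  A -x-> B -y-> C0 belongs to the class s(d) *)
Variable s : forall {C0 A : obj C}, Ext E C0 A ->
    forall {B : obj C}, hom C A B -> hom C B C0 -> Prop.

(* s(d) is an equivalence class of sequences A -> B -> C0 *)
Definition real_class := forall (C0 A : obj C) (d : Ext E C0 A),
  (exists B (x : hom C A B) (y : hom C B C0), s d x y) /\
  (forall B (x : hom C A B) (y : hom C B C0) B' (x' : hom C A B') (y' : hom C B' C0),
      s d x y -> s d x' y' ->
      exists b : hom C B B', is_iso b /\ comp b x = x' /\ comp y' b = y) /\
  (forall B (x : hom C A B) (y : hom C B C0) B' (b : hom C B B')
      (x' : hom C A B') (y' : hom C B' C0),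
      s d x y -> is_iso b -> comp b x = x' -> comp y' b = y -> s d x' y').

Definition real_morph := forall A B C0 (d : Ext E C0 A) (x : hom C A B) (y : hom C B C0)
    A' B' C' (d' : Ext E C' A') (x' : hom C A' B') (y' : hom C B' C')
    (a : hom C A A') (c : hom C C0 C'),
  s d x y -> s d' x' y' -> push E a d = pull E c d' ->
  exists b : hom C B B', comp b x = comp x' a /\ comp c y = comp y' b.

Definition real_zero := forall (A C0 S : obj C) (i1 : hom C A S) (i2 : hom C C0 S)
    (p1 : hom C S A) (p2 : hom C S C0),
  is_biproduct i1 i2 p1 p2 -> s (0 : Ext E C0 A) i1 p2.

Definition real_sum := forall (A A' B B' C0 C' : obj C)
    (d : Ext E C0 A) (x : hom C A B) (y : hom C B C0)
    (d' : Ext E C' A') (x' : hom C A' B') (y' : hom C B' C')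
    SA (ia : hom C A SA) (ia' : hom C A' SA) (pa : hom C SA A) (pa' : hom C SA A')
    SB (ib : hom C B SB) (ib' : hom C B' SB) (pb : hom C SB B) (pb' : hom C SB B')
    SC (ic : hom C C0 SC) (ic' : hom C C' SC) (pc : hom C SC C0) (pc' : hom C SC C'),
  is_biproduct ia ia' pa pa' -> is_biproduct ib ib' pb pb' ->
  is_biproduct ic ic' pc pc' ->
  s d x y -> s d' x' y' ->
  s (push E ia (pull E pc d) + push E ia' (pull E pc' d'))
    (comp ib (comp x pa) + comp ib' (comp x' pa'))
    (comp ic (comp y pb) + comp ic' (comp y' pb')).

Definition ET3 := forall A B C0 (d : Ext E C0 A) (x : hom C A B) (y : hom C B C0)
    A' B' C' (d' : Ext E C' A') (x' : hom C A' B') (y' : hom C B' C')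
    (a : hom C A A') (b : hom C B B'),
  s d x y -> s d' x' y' -> comp b x = comp x' a ->
  exists c : hom C C0 C', comp c y = comp y' b /\ push E a d = pull E c d'.

Definition ET3op := forall A B C0 (d : Ext E C0 A) (x : hom C A B) (y : hom C B C0)
    A' B' C' (d' : Ext E C' A') (x' : hom C A' B') (y' : hom C B' C')
    (b : hom C B B') (c : hom C C0 C'),
  s d x y -> s d' x' y' -> comp c y = comp y' b ->
  exists a : hom C A A', comp b x = comp x' a /\ push E a d = pull E c d'.

Definition ET4 := forall A B D F C0 (d : Ext E D A) (f : hom C A B) (f' : hom C B D)
    (d' : Ext E F B) (g : hom C B C0) (g' : hom C C0 F),
  s d f f' -> s d' g g' ->
  exists E0 (h' : hom C C0 E0) (d'' : Ext E E0 A) (dd : hom C D E0) (e : hom C E0 F),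
    s d'' (comp g f) h' /\
    s (push E f' d') dd e /\
    comp dd f' = comp h' g /\
    comp e h' = g' /\
    pull E dd d'' = d /\
    push E f d'' = pull E e d'.

(* ET4^op (stated with the dual labelling) *)
Definition ET4op := forall A B D F C0 (d : Ext E A D) (f' : hom C D B) (f : hom C B A)
    (d' : Ext E B F) (g' : hom C F C0) (g : hom C C0 B),
  s d f' f -> s d' g' g ->
  exists E0 (h' : hom C E0 C0) (d'' : Ext E A E0) (dd : hom C E0 D) (e : hom C F E0),
    s d'' h' (comp f g) /\
    s (pull E f' d') e dd /\
    comp f' dd = comp g h' /\
    comp h' e = g' /\
    push E dd d'' = d /\
    pull E f d'' = push E e d'.

Definition ET_axioms :=
  real_class /\ real_morph /\ real_zero /\ real_sum /\ ET3 /\ ET3op /\ ET4 /\ ET4op.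
End ETAxioms.

Record ExtriCat := {
  ecat :> AddCat;
  eE : Bifunctor ecat;
  esr : forall (C0 A : obj ecat), Ext eE C0 A ->
      forall B : obj ecat, hom ecat A B -> hom ecat B C0 -> Prop;
  eaxioms : ET_axioms esr
}.
Arguments esr {e C0 A} d {B} _ _.

Section ExtriDefs.
Variable C : ExtriCat.
Local Notation E := (eE C).

Definition Etriangle (A B C0 : obj C) (x : hom C A B) (y : hom C B C0) (d : Ext E C0 A) :=
  esr d x y.

Definition injective_obj (I : obj C) := forall C0 (d : Ext E C0 I), d = 0.
Definition projective_obj (P : obj C) := forall A (d : Ext E P A), d = 0.

Definition enough_injectives := forall A : obj C,
  exists I C0 (x : hom C A I) (y : hom C I C0) (d : Ext E C0 A),
    Etriangle x y d /\ injective_obj I.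
Definition enough_projectives := forall C0 : obj C,
  exists K P (x : hom C K P) (y : hom C P C0) (d : Ext E C0 K),
    Etriangle x y d /\ projective_obj P.

Definition morclass := forall A B : obj C, hom C A B -> Prop.

Definition is_ideal (M : morclass) :=
  [/\ (forall A B, M A B 0),
      (forall A B (f g : hom C A B), M A B f -> M A B g -> M A B (f + g))
    & (forall A B A' B' (h : hom C A' A) (f : hom C A B) (g : hom C B B'),
        M A B f -> M A' B' (comp g (comp f h)))].

Definition perpR (M : morclass) : morclass := fun A Y g =>
  forall X C0 (m : hom C X C0), M X C0 m ->
  forall d : Ext E C0 A, pull E m (push E g d) = 0.

Definition perpL (M : morclass) : morclass := fun X C0 g =>
  forall A Y (m : hom C A Y), M A Y m ->
  forall d : Ext E C0 A, pull E g (push E m d) = 0.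

Definition cotorsion_pair (I J : morclass) :=
  (forall A B f, I A B f <-> perpL J f) /\
  (forall A B f, J A B f <-> perpR I f).

(* i : X -> C0 is a special I-precover of C0: there are E-triangles
   A -x-> B -y-> C0 -d-> and A' -x'-> X -i-> C0 -d'-> and a morphism of
   E-triangles (j, b, id_C0) from the first to the second with j in I^perp *)
Definition special_precover (I : morclass) (X C0 : obj C) (i : hom C X C0) :=
  I X C0 i /\
  exists A B (x : hom C A B) (y : hom C B C0) (d : Ext E C0 A)
         A' (x' : hom C A' X) (d' : Ext E C0 A') (j : hom C A A') (b : hom C B X),
    Etriangle x y d /\ Etriangle x' i d' /\
    comp b x = comp x' j /\ comp (idm C0) y = comp i b /\
    push E j d = pull E (idm C0) d' /\
    perpR I j.

(* e : A -> X is a special J-preenvelope of A: there are E-triangles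
   A -e-> X -y-> Y -d-> and A -x'-> B -y'-> C0 -d'-> and a morphism of
   E-triangles (id_A, b, j) from the first to the second with j in ^perp J *)
Definition special_preenvelope (J : morclass) (A X : obj C) (e : hom C A X) :=
  J A X e /\
  exists Y (y : hom C X Y) (d : Ext E Y A) B C0 (x' : hom C A B) (y' : hom C B C0)
         (d' : Ext E C0 A) (b : hom C X B) (j : hom C Y C0),
    Etriangle e y d /\ Etriangle x' y' d' /\
    comp b e = comp x' (idm A) /\ comp j y = comp y' b /\
    push E (idm A) d = pull E j d' /\
    perpL J j.

Definition special_precovering (I : morclass) :=
  forall C0 : obj C, exists X (i : hom C X C0), special_precover I i.

Definition special_preenveloping (J : morclass) :=
  forall A : obj C, exists X (e : hom C A X), special_preenvelope J e.
End ExtriDefs.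

(* Take an injective copresentation A -a-> E0 -> C0 (delta) and a special
   I-precover i : X -> C0, and realize i^* delta as A -e-> M -> X.  Every m in I
   ending at C0 factors through i, since the precover triangle is j_* d with
   j in I^perp, so m^* kills it.  As E0 is injective, every extension of C1 by
   A is g^* delta; for m : X0 -> C1 in I write g m = i h, so that
   m^* e_* g^* delta = h^* e_* (i^* delta) = 0 because e inflates i^* delta.
   Hence e is in I^perp = J, and the morphism of E-triangles (id_A, _, i) with
   i in I = ^perp J makes e a special J-preenvelope.  The converse is dual,
   with a projective presentation and pushouts. *)
From Pilot Require Import Defs.
From mathcomp Require Import all_boot all_algebra.
Set Implicit Arguments. Unset Strict Implicit. Unset Printing Implicit Defensive.
Import GRing.Theory.
Local Open Scope ring_scope.
Local Notation hom := Defs.hom.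
Local Notation comp := Defs.comp.
Local Notation compA := Defs.compA.

Lemma addr_idem_eq0 (V : zmodType) (x : V) : x = x + x -> x = 0.
Proof. by move=> x_eq_2x; apply: (addrI x); rewrite addr0 -x_eq_2x. Qed.

Section ExtriangulatedFacts.
Variable C : ExtriCat.
Local Notation E := (eE C).

Lemma pull0 C' C0 A (c : hom C C' C0) : pull E c (0 : Ext E C0 A) = 0.
Proof. by apply: addr_idem_eq0; rewrite -pull_add addr0. Qed.

Lemma push0 C0 A A' (a : hom C A A') : push E a (0 : Ext E C0 A) = 0.
Proof. by apply: addr_idem_eq0; rewrite -push_add addr0. Qed.

Lemma esr_realize (C0 A : obj C) (d : Ext E C0 A) :
  exists B (x : hom C A B) (y : hom C B C0), esr d x y.
Proof. by have [rc _] := eaxioms C; apply: (rc _ _ d).1. Qed.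

Lemma esr_morph : real_morph (@esr C).
Proof. by have [_ [rm _]] := eaxioms C. Qed.

Lemma esr_ET3 : ET3 (@esr C).
Proof. by have [_ [_ [_ [_ [e3 _]]]]] := eaxioms C. Qed.

Lemma esr_ET3op : ET3op (@esr C).
Proof. by have [_ [_ [_ [_ [_ [e3o _]]]]]] := eaxioms C. Qed.

Lemma esr_split (A C0 : obj C) : exists S (i1 : hom C A S) (i2 : hom C C0 S)
  (p1 : hom C S A) (p2 : hom C S C0),
  is_biproduct i1 i2 p1 p2 /\ esr (0 : Ext E C0 A) i1 p2.
Proof.
have [_ [_ [rz _]]] := eaxioms C.
have [_ biprod] := acat_additive C.
have [S [i1 [i2 [p1 [p2 bp]]]]] := biprod A C0.
by exists S, i1, i2, p1, p2; split => //; apply: rz bp.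
Qed.

Lemma pull_deflation_eq0 A B C0 (d : Ext E C0 A) (x : hom C A B) (y : hom C B C0) :
  esr d x y -> pull E y d = 0.
Proof.
move=> T.
have [S [i1 [i2 [p1 [p2 [_ Ts]]]]]] := esr_split A B.
have [a [_ <-]] := esr_ET3op Ts T (b := p2) (c := y) erefl.
exact: push0.
Qed.

Lemma push_inflation_eq0 A B C0 (d : Ext E C0 A) (x : hom C A B) (y : hom C B C0) :
  esr d x y -> push E x d = 0.
Proof.
move=> T.
have [S [i1 [i2 [p1 [p2 [_ Ts]]]]]] := esr_split B B.
have [c [_ ->]] := esr_ET3 T Ts (a := x) (b := i1) erefl.
exact: pull0.
Qed.

Lemma factor_through_inflation K X Y Y0 (d : Ext E Y K) (e : hom C K X)
    (y : hom C X Y) (g : hom C K Y0) :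
  esr d e y -> push E g d = 0 -> exists h : hom C X Y0, comp h e = g.
Proof.
move=> T gd0.
have [S [i1 [i2 [p1 [p2 [[p1i1 _ _ _ _] Ts]]]]]] := esr_split Y0 Y.
have [b [be _]] := esr_morph T Ts (a := g) (c := idm Y)
  (ltac:(by rewrite gd0 pull0)).
by exists (comp p1 b); rewrite -compA be compA p1i1 comp1m.
Qed.

Lemma factor_through_deflation A U C0 P (d : Ext E C0 A) (u : hom C A U)
    (v : hom C U C0) (c : hom C P C0) :
  esr d u v -> pull E c d = 0 -> exists b : hom C P U, comp v b = c.
Proof.
move=> T cd0.
have [S [i1 [i2 [p1 [p2 [[_ p2i2 _ _ _] Ts]]]]]] := esr_split A P.
have [b [_ vb]] := esr_morph Ts T (a := idm A) (c := c)
  (ltac:(by rewrite cd0 push0)).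
by exists (comp b i2); rewrite compA -vb -compA p2i2 compm1.
Qed.

Lemma projective_presentation_push_surj K P C0 A (dl : Ext E C0 K)
    (k : hom C K P) (p : hom C P C0) :
  esr dl k p -> projective_obj P ->
  forall d0 : Ext E C0 A, exists f : hom C K A, push E f dl = d0.
Proof.
move=> T projP d0.
have [U [u [v Tu]]] := esr_realize d0.
have [b vb] := factor_through_deflation (c := p) Tu (projP _ _).
have [a [_ ad]] := esr_ET3op T Tu (b := b) (c := idm C0)
  (ltac:(by rewrite comp1m vb)).
by exists a; rewrite ad pull_id.
Qed.

Lemma injective_copresentation_pull_surj A E0 C0 C1 (dl : Ext E C0 A)
    (a : hom C A E0) (c : hom C E0 C0) :
  esr dl a c -> injective_obj E0 ->
  forall d0 : Ext E C1 A, exists g : hom C C1 C0, pull E g dl = d0.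
Proof.
move=> T injE0 d0.
have [U [u [v Tu]]] := esr_realize d0.
have [h ha] := factor_through_inflation (g := a) Tu (injE0 _ _).
have [g [_ gd]] := esr_ET3 Tu T (a := idm A) (b := h)
  (ltac:(by rewrite compm1 ha)).
by exists g; rewrite -gd push_id.
Qed.

Lemma ideal_compl (M : morclass C) A B B' (f : hom C A B) (g : hom C B B') :
  is_ideal M -> M A B f -> M A B' (comp g f).
Proof. by case=> _ _ idl Mf; rewrite -[f]compm1; apply: idl. Qed.

Lemma ideal_compr (M : morclass C) A' A B (h : hom C A' A) (f : hom C A B) :
  is_ideal M -> M A B f -> M A' B (comp f h).
Proof. by case=> _ _ idl Mf; rewrite -[comp f h]comp1m; apply: idl. Qed.

Lemma special_precover_factor (I : morclass C) X C0 (i : hom C X C0) :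
  special_precover I i ->
  forall X0 (m : hom C X0 C0), I X0 C0 m -> exists h, comp i h = m.
Proof.
case=> _ [A [B [x [y [d [A' [x' [d' [j [b
  [_ [Ti [_ [_ [jd jperp]]]]]]]]]]]]]]] X0 m Im.
apply: (factor_through_deflation Ti).
by move: jd; rewrite pull_id => <-; apply: jperp.
Qed.

Lemma special_preenvelope_factor (J : morclass C) A X (e : hom C A X) :
  special_preenvelope J e ->
  forall Y0 (m : hom C A Y0), J A Y0 m -> exists h, comp h e = m.
Proof.
case=> _ [Y [y [d [B [C0 [x' [y' [d' [b [j
  [Te [_ [_ [_ [dj jperp]]]]]]]]]]]]]]] Y0 m Jm.
apply: (factor_through_inflation Te).
by move: dj; rewrite push_id => ->; rewrite push_pull; apply: jperp.
Qed.

Section FromPrecover.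
Variables (I J : morclass C).
Hypotheses (idealI : is_ideal I) (cotorsionIJ : cotorsion_pair I J).
Variables (A E0 C0 : obj C) (a : hom C A E0) (c : hom C E0 C0) (dl : Ext E C0 A).
Hypotheses (Tdl : esr dl a c) (injE0 : injective_obj E0).
Variables (X : obj C) (i : hom C X C0).
Hypothesis precover_i : special_precover I i.
Variables (M : obj C) (e : hom C A M) (q : hom C M X).
Hypothesis Te : esr (pull E i dl) e q.

Lemma inflation_of_pullback_perpR : perpR I e.
Proof.
move=> X0 C1 m Im d0.
have [g <-] := injective_copresentation_pull_surj Tdl injE0 d0.
have [h ih] := special_precover_factor precover_i (ideal_compl g idealI Im).
by rewrite push_pull -pull_comp -ih pull_comp -push_pull (push_inflation_eq0 Te) pull0.
Qed.

Lemma special_preenvelope_of_precover : special_preenvelope J e.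
Proof.
have [toI toJ] := cotorsionIJ.
split; first exact/toJ/inflation_of_pullback_perpR.
have [b [be ib]] := esr_morph Te Tdl (a := idm A) (c := i)
  (ltac:(by rewrite push_id)).
exists X, q, (pull E i dl), E0, C0, a, c, dl, b, i.
do 5 (split => //); first by rewrite push_id.
by apply/toI; case: precover_i.
Qed.
End FromPrecover.

Section FromPreenvelope.
Variables (I J : morclass C).
Hypotheses (idealJ : is_ideal J) (cotorsionIJ : cotorsion_pair I J).
Variables (K P C0 : obj C) (k : hom C K P) (p : hom C P C0) (dl : Ext E C0 K).
Hypotheses (Tdl : esr dl k p) (projP : projective_obj P).
Variables (X : obj C) (e : hom C K X).
Hypothesis preenvelope_e : special_preenvelope J e.
Variables (N : obj C) (x : hom C X N) (i : hom C N C0).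
Hypothesis Ti : esr (push E e dl) x i.

Lemma deflation_of_pushout_perpL : perpL J i.
Proof.
move=> A0 Y0 m Jm d0.
have [f <-] := projective_presentation_push_surj Tdl projP d0.
have [h he] := special_preenvelope_factor preenvelope_e (ideal_compr f idealJ Jm).
by rewrite -push_comp -he push_comp -push_pull (pull_deflation_eq0 Ti) push0.
Qed.

Lemma special_precover_of_preenvelope : special_precover I i.
Proof.
have [toI toJ] := cotorsionIJ.
split; first exact/toI/deflation_of_pushout_perpL.
have [b [bk ib]] := esr_morph Tdl Ti (a := e) (c := idm C0)
  (ltac:(by rewrite pull_id)).
exists K, P, k, p, dl, X, x, (push E e dl), e, b.
do 5 (split => //); first by rewrite pull_id.
by apply/toJ; case: preenvelope_e.
Qed.
End FromPreenvelope.
End ExtriangulatedFacts.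

Theorem mainTheorem12 (C : ExtriCat) (I J : morclass C) :
  enough_projectives C -> enough_injectives C ->
  is_ideal I -> is_ideal J -> cotorsion_pair I J ->
  special_precovering I <-> special_preenveloping J.
Proof.
move=> enough_proj enough_inj idealI idealJ cotorsionIJ; split.
- move=> precovering A.
  have [E0 [C0 [a [c [dl [Tdl injE0]]]]]] := enough_inj A.
  have [X [i precover_i]] := precovering C0.
  have [M [e [q Te]]] := esr_realize (pull (eE C) i dl).
  exists M, e.
  exact: (special_preenvelope_of_precover idealI cotorsionIJ Tdl injE0 precover_i Te).
- move=> preenveloping C0.
  have [K [P [k [p [dl [Tdl projP]]]]]] := enough_proj C0.
  have [X [e preenvelope_e]] := preenveloping K.
  have [N [x [i Ti]]] := esr_realize (push (eE C) e dl).
  exists N, i.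
  exact: (special_precover_of_preenvelope idealJ cotorsionIJ Tdl projP preenvelope_e Ti).
Qed.
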